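(* For every integer $d\ge1$ there is a constant $c(d)>0$ depending only on $d$ such that for every integer $t\ge2$, $VC(\mathcal{G}(t))\le c(d)\cdot t\ln t$.
   Context: $\mathcal{T}(t)$ is the set of partitions of $[0,1]^d$ with exactly $t$ cells that arise as the leaves of a Mondrian tree, i.e. of a binary tree obtained by starting from $[0,1]^d$ and repeatedly splitting a leaf cell $\mathcal{C}$ along an axis-aligned hyperplane into $\{x\in\mathcal{C}:x_J\le s\}$ and $\{x\in\mathcal{C}:x_J>s\}$. $\mathcal{G}(t)=\{\sum_{j=1}^t c_j\mathbb{I}(x\in\mathcal{C}_j):c_j\in\mathbb{R},\ \{\mathcal{C}_1,\dots,\mathcal{C}_t\}\in\mathcal{T}(t)\}$. For a real function $f$ on $\mathcal{X}$, its subgraph is $\{(x,y)\in\mathcal{X}\times\mathbb{R}:f(x)>y\}$; a collection of sets shatters a finite set of points if every subset of it can be written as its intersection with a member of the collection; the VC dimension $VC(\mathcal{F})$ of a function class $\mathcal{F}$ is the largest size of a set of points in $\mathcal{X}\times\mathbb{R}$ shattered by the subgraphs of the functions in $\mathcal{F}$. *)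

From Stdlib Require Import Reals List ClassicalEpsilon.
From mathcomp Require Import ssreflect ssrbool ssrnat eqtype fintype.
Import ListNotations.
Open Scope R_scope.

Definition pt (d : nat) := 'I_d -> R.

Definition cell (d : nat) := pt d -> Prop.

Definition unit_cube (d : nat) : cell d := fun x => forall i : 'I_d, 0 <= x i <= 1.

Definition split_le d (C : cell d) (J : 'I_d) (s : R) : cell d :=
  fun x => C x /\ x J <= s.
Definition split_gt d (C : cell d) (J : 'I_d) (s : R) : cell d :=
  fun x => C x /\ s < x J.

(* Leaves of Mondrian trees: start from [0,1]^d and repeatedly replace a
   leaf C by its two children {x in C : x_J <= s}, {x in C : x_J > s};
   children are required to be nonempty so that the leaves form a genuine
   partition (with every cell nonempty). *)
Inductive mondrian (d : nat) : list (cell d) -> Prop :=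
| mondrian_root : mondrian d [unit_cube d]
| mondrian_split (P1 P2 : list (cell d)) (C : cell d) (J : 'I_d) (s : R) :
    mondrian d (P1 ++ C :: P2) ->
    (exists x, split_le d C J s x) ->
    (exists x, split_gt d C J s x) ->
    mondrian d (P1 ++ split_le d C J s :: split_gt d C J s :: P2).

Definition mondrian_parts (d t : nat) (P : list (cell d)) : Prop :=
  mondrian d P /\ length P = t.

Definition ind d (C : cell d) (x : pt d) : R :=
  if excluded_middle_informative (C x) then 1 else 0.

Fixpoint pcsum d (P : list (cell d)) (c : list R) (x : pt d) : R :=
  match P, c with
  | C :: P', a :: c' => a * ind d C x + pcsum d P' c' x
  | _, _ => 0
  end.

Definition G (d t : nat) (g : pt d -> R) : Prop :=
  exists (P : list (cell d)) (c : list R),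
    mondrian_parts d t P /\ length c = t /\ g = pcsum d P c.

Definition shatters d (F : (pt d -> R) -> Prop) (S : list (pt d * R)) : Prop :=
  forall T : pt d * R -> Prop,
    exists f, F f /\ forall p, In p S -> (T p <-> f (fst p) > snd p).

Definition VC_le d (F : (pt d -> R) -> Prop) (B : R) : Prop :=
  forall S : list (pt d * R),
    NoDup S -> (forall p, In p S -> unit_cube d (fst p)) ->
    shatters d F S -> INR (length S) <= B.

(* On a sample of n points, a Mondrian partition with t
   cells is determined, as far as the sample can tell, by its t - 1 splits, and
   a split only matters through the cell it cuts, its coordinate J and which of
   the n + 1 gaps between the sample's J-coordinates its threshold lies in.
   Likewise, in each cell the subgraph of sum_j c_j 1_{C_j} only sees in which
   of the n + 1 gaps between the sample's y-values c_j lies.  Hence G(t)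
   realises at most (t d (n + 1))^(t-1) (n + 1)^t patterns on the sample, so a
   shattered sample has 2^n <= (d t (n + 1)^2)^t, which forces n = O(t ln t). *)

From Pilot Require Import Defs.
From Stdlib Require Import Reals Lra Lia List ClassicalEpsilon.
From Stdlib Require FinFun.
Import ListNotations.
Open Scope R_scope.

Definition below (o : option R) (v : R) : bool :=
  match o with
  | Some b => if Rle_dec v b then true else false
  | None => false
  end.

Definition threshold (P : R -> Prop) (vs : list R) : option R :=
  fold_right (fun w o =>
    if excluded_middle_informative (P w)
    then Some (match o with Some b => Rmax w b | None => w end)
    else o) None vs.

Lemma below_threshold P vs v :
  below (threshold P vs) v = true <-> exists w, In w vs /\ P w /\ v <= w.
Proof.
  induction vs as [|w vs IH]; simpl.
  - split; [discriminate | intros (? & [] & _)].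
  - destruct (excluded_middle_informative (P w)) as [Pw|nPw].
    + assert (Hmax :
        below (Some (match threshold P vs with Some b => Rmax w b | None => w end)) v = true
        <-> v <= w \/ below (threshold P vs) v = true).
      { destruct (threshold P vs) as [b|]; simpl; [pose proof (Rmax_Rle w b v)|];
          repeat destruct Rle_dec; intuition (discriminate || lra). }
      rewrite Hmax, IH. firstorder (subst; auto).
    + rewrite IH. firstorder (subst; contradiction).
Qed.

Lemma threshold_in P vs : In (threshold P vs) (None :: map Some vs).
Proof.
  induction vs as [|w vs IH]; simpl; [now left|].
  destruct (excluded_middle_informative (P w)); [|now destruct IH; [left|right; right]].
  right. destruct IH as [<-|IH]; [now left|].
  apply in_map_iff in IH as (b & <- & Hb).
  apply Rmax_case; [now left | right; now apply in_map].
Qed.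

Lemma below_threshold_iff (P : R -> Prop) vs v :
  (forall u w, u <= w -> P w -> P u) -> In v vs ->
  below (threshold P vs) v = true <-> P v.
Proof.
  intros Pdown Hv. rewrite below_threshold.
  split; [intros (w & _ & Pw & Hvw); exact (Pdown v w Hvw Pw) |].
  intro Pv. exists v. auto using Rle_refl.
Qed.

Lemma nth_map_lt {A B} (f : A -> B) l d d' n :
  (n < length l)%nat -> nth n (map f l) d' = f (nth n l d).
Proof. intro Hn. rewrite nth_indep with (d' := f d) by (now rewrite length_map). apply map_nth. Qed.

Fixpoint words {A} (alphabet : list A) (k : nat) : list (list A) :=
  match k with
  | O => [[]]
  | S k => flat_map (fun a => map (cons a) (words alphabet k)) alphabet
  end.

Lemma length_words {A} (alphabet : list A) k :
  length (words alphabet k) = (length alphabet ^ k)%nat.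
Proof.
  induction k as [|k IH]; simpl; [reflexivity|].
  rewrite (flat_map_constant_length (c := length alphabet ^ k)); [reflexivity|].
  intros a _. now rewrite length_map.
Qed.

Lemma in_words {A} (alphabet : list A) w :
  (forall a, In a w -> In a alphabet) -> In w (words alphabet (length w)).
Proof.
  induction w as [|a w IH]; intro Hw; simpl; [now left|].
  apply in_flat_map. exists a. split; [apply Hw; now left|].
  apply in_map, IH. intros b Hb. apply Hw. now right.
Qed.

Lemma NoDup_prepend_all {A} (alphabet : list A) (W : list (list A)) :
  NoDup alphabet -> NoDup W -> NoDup (flat_map (fun a => map (cons a) W) alphabet).
Proof.
  intros Hnd HW. induction Hnd as [|a alphabet Ha Hnd IH]; simpl; [constructor|].
  apply NoDup_app; [| exact IH |].
  - apply FinFun.Injective_map_NoDup; [intros u v [=]; assumption | exact HW].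
  - intros w Hw Hw'. apply in_map_iff in Hw as (u & <- & _).
    apply in_flat_map in Hw' as (b & Hb & Hw'). apply in_map_iff in Hw' as (v & [= -> _] & _).
    contradiction.
Qed.

Lemma NoDup_words {A} (alphabet : list A) k : NoDup alphabet -> NoDup (words alphabet k).
Proof.
  intro Hnd. induction k as [|k IH]; simpl; [repeat constructor; intros []|].
  now apply NoDup_prepend_all.
Qed.

Lemma length_in_words {A} (alphabet : list A) k w : In w (words alphabet k) -> length w = k.
Proof.
  revert w. induction k as [|k IH]; intros w Hw; simpl in Hw.
  - now destruct Hw as [<-|[]].
  - apply in_flat_map in Hw as (a & _ & Hw). apply in_map_iff in Hw as (u & <- & Hu).
    simpl. now rewrite (IH u Hu).
Qed.

Lemma bool_lists_incl_length n (M : list (list bool)) :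
  (forall b, length b = n -> In b M) -> (2 ^ n <= length M)%nat.
Proof.
  intro HM. rewrite <- (length_words [true; false]).
  apply NoDup_incl_length.
  - apply NoDup_words. repeat constructor; simpl; intuition discriminate.
  - intros b Hb. exact (HM b (length_in_words _ _ _ Hb)).
Qed.

Definition in_cellb d (C : cell d) (x : pt d) : bool :=
  if excluded_middle_informative (C x) then true else false.

Lemma in_cellbP d C x : in_cellb d C x = true <-> C x.
Proof. unfold in_cellb. destruct excluded_middle_informative; intuition discriminate. Qed.

Lemma ind_in_cellb d C x : Defs.ind d C x = if in_cellb d C x then 1 else 0.
Proof. unfold Defs.ind, in_cellb. now destruct excluded_middle_informative. Qed.

Definition cells_at d (P : list (cell d)) (x : pt d) : nat :=
  length (filter (fun C => in_cellb d C x) P).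

Lemma cells_at_cons d C P x :
  cells_at d (C :: P) x = ((if in_cellb d C x then 1 else 0) + cells_at d P x)%nat.
Proof. unfold cells_at. simpl. now destruct in_cellb. Qed.

Lemma cells_at_app d P Q x : cells_at d (P ++ Q) x = (cells_at d P x + cells_at d Q x)%nat.
Proof. unfold cells_at. now rewrite filter_app, length_app. Qed.

Lemma cells_at_split d C J s x :
  cells_at d [split_le d C J s; split_gt d C J s] x = cells_at d [C] x.
Proof.
  rewrite !cells_at_cons. unfold in_cellb, split_le, split_gt.
  repeat destruct excluded_middle_informative; try reflexivity; exfalso;
    destruct (Rle_dec (x J) s); intuition lra.
Qed.

Lemma mondrian_cells_at_le1 d P x : mondrian d P -> (cells_at d P x <= 1)%nat.
Proof.
  induction 1 as [|P1 P2 C J s _ IH _ _].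
  - rewrite cells_at_cons. unfold cells_at. destruct in_cellb; simpl; lia.
  - change (P1 ++ C :: P2) with (P1 ++ [C] ++ P2) in IH.
    change (P1 ++ split_le d C J s :: split_gt d C J s :: P2)
      with (P1 ++ [split_le d C J s; split_gt d C J s] ++ P2).
    rewrite !cells_at_app, cells_at_split in *. exact IH.
Qed.

Definition empty_cell d : cell d := fun _ => False.

Lemma cells_at_pos d P k x : nth k P (empty_cell d) x -> (1 <= cells_at d P x)%nat.
Proof.
  revert k. induction P as [|C P IH]; intros [|k] Hx; try contradiction; rewrite cells_at_cons.
  - simpl in Hx. apply in_cellbP in Hx. rewrite Hx. lia.
  - specialize (IH k Hx). lia.
Qed.

Lemma pcsum_outside d P c x : cells_at d P x = 0%nat -> pcsum d P c x = 0.
Proof.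
  revert c. induction P as [|C P IH]; intros [|a c] H; simpl; try reflexivity.
  rewrite cells_at_cons in H. rewrite ind_in_cellb.
  destruct in_cellb; [discriminate|]. rewrite IH by exact H. ring.
Qed.

Lemma pcsum_in_cell d P c x k :
  (cells_at d P x <= 1)%nat -> length c = length P -> nth k P (empty_cell d) x ->
  pcsum d P c x = nth k c 0.
Proof.
  revert c k. induction P as [|C P IH]; intros [|a c] k Hle Hlen Hx; try discriminate;
    [destruct k; contradiction|].
  simpl in Hlen |- *. rewrite ind_in_cellb. rewrite cells_at_cons in Hle.
  destruct k as [|k].
  - simpl in Hx. apply in_cellbP in Hx. rewrite Hx in Hle |- *.
    rewrite pcsum_outside by lia. ring.
  - pose proof (cells_at_pos d P k x Hx).
    destruct in_cellb; [lia|]. rewrite (IH c k); [ring | lia | congruence | exact Hx].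
Qed.

(* A split (p, J, o) cuts the p-th cell at the threshold o on coordinate J,
   the lower part keeping index p; [locate] replays a list of splits to find
   the index of the cell containing x. *)
Definition split_code d := (nat * fintype.ordinal d * option R)%type.

Definition relocate d (a : split_code d) (x : pt d) (k : nat) : nat :=
  let '(p, J, o) := a in
  match Nat.compare k p with
  | Lt => k
  | Eq => if below o (x J) then p else S p
  | Gt => S k
  end.

Definition locate d (w : list (split_code d)) (x : pt d) : nat :=
  fold_left (fun k a => relocate d a x k) w 0%nat.

Definition split_thresholds d (xs : list (pt d)) (J : fintype.ordinal d) : list (option R) :=
  None :: map Some (map (fun x => x J) xs).

Definition split_alphabet d (js : list (fintype.ordinal d)) (xs : list (pt d)) (t : nat) :
    list (split_code d) :=
  flat_map (fun p => flat_map (fun J => map (fun o => (p, J, o)) (split_thresholds d xs J)) js)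
    (seq 0 t).

Lemma length_split_alphabet d js xs t :
  length (split_alphabet d js xs t) = (t * (length js * S (length xs)))%nat.
Proof.
  unfold split_alphabet. rewrite (flat_map_constant_length (c := (length js * S (length xs))%nat)).
  - now rewrite length_seq.
  - intros p _. apply flat_map_constant_length. intros J _.
    unfold split_thresholds. now rewrite length_map; simpl; rewrite !length_map.
Qed.

Lemma in_split_alphabet d js xs t p J o :
  (p < t)%nat -> In J js -> In o (split_thresholds d xs J) ->
  In (p, J, o) (split_alphabet d js xs t).
Proof.
  intros Hp HJ Ho. apply in_flat_map. exists p. split; [apply in_seq; lia|].
  apply in_flat_map. exists J. split; [exact HJ | now apply in_map].
Qed.

Lemma split_alphabet_mono d js xs t t' a :
  (t <= t')%nat -> In a (split_alphabet d js xs t) -> In a (split_alphabet d js xs t').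
Proof.
  intros Ht Ha. apply in_flat_map in Ha as (p & Hp & Ha). apply in_seq in Hp.
  apply in_flat_map. exists p. split; [apply in_seq; lia | exact Ha].
Qed.

Lemma relocate_split d P1 P2 C J s o x k :
  (below o (x J) = true <-> x J <= s) ->
  nth k (P1 ++ C :: P2) (empty_cell d) x ->
  nth (relocate d (length P1, J, o) x k)
    (P1 ++ split_le d C J s :: split_gt d C J s :: P2) (empty_cell d) x.
Proof.
  intros Hbelow Hx. simpl.
  destruct (Nat.compare_spec k (length P1)) as [->|Hk|Hk].
  - rewrite nth_middle in Hx. destruct (below o (x J)) eqn:E.
    + rewrite nth_middle. split; [exact Hx | now apply Hbelow].
    + replace (S (length P1)) with (length P1 + 1)%nat by lia.
      rewrite app_nth2_plus. split; [exact Hx|].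
      destruct (Rle_dec (x J) s) as [H|H]; [apply Hbelow in H; congruence | lra].
  - rewrite app_nth1 in * by exact Hk. exact Hx.
  - replace k with (length P1 + S (k - S (length P1)))%nat in Hx |- * by lia.
    rewrite app_nth2_plus in Hx. rewrite <- Nat.add_succ_r, app_nth2_plus. exact Hx.
Qed.

(* A threshold s can be replaced by the largest sample coordinate below it:
   this sends every sample point to the same side. *)
Lemma mondrian_locate d js xs P : (forall J, In J js) -> mondrian d P ->
  exists w, length w = pred (length P) /\
    (forall a, In a w -> In a (split_alphabet d js xs (length P))) /\
    (forall x, In x xs -> unit_cube d x -> nth (locate d w x) P (empty_cell d) x).
Proof.
  intros Hjs. induction 1 as [|P1 P2 C J s _ (w & Hlen & Hw & Hloc) _ _].
  - exists []. split; [reflexivity|]. split; [intros _ []|]. intros x _ Hx; exact Hx.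
  - set (o := threshold (fun v => v <= s) (map (fun x => x J) xs)).
    exists (w ++ [(length P1, J, o)]). rewrite !length_app in *; simpl in *.
    split; [lia|]. split.
    + intros a Ha. apply in_app_or in Ha as [Ha|[<-|[]]].
      * apply (split_alphabet_mono _ _ _ (length P1 + S (length P2))); [lia | now apply Hw].
      * apply in_split_alphabet; [lia | apply Hjs | apply threshold_in].
    + intros x Hx Hcube. unfold locate. rewrite fold_left_app.
      apply relocate_split; [|exact (Hloc x Hx Hcube)].
      apply (below_threshold_iff (fun v => v <= s)); [intros; lra|].
      exact (in_map (fun y : pt d => y J) _ _ Hx).
Qed.

Definition subgraph_pattern d (g : pt d -> R) (pts : list (pt d * R)) : list bool :=
  map (fun p => if Rlt_dec (snd p) (g (fst p)) then true else false) pts.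

Lemma shatters_all_patterns d F pts : NoDup pts -> shatters d F pts ->
  forall b, length b = length pts -> exists f, F f /\ subgraph_pattern d f pts = b.
Proof.
  intros Hnd Hsh b Hb.
  set (p0 := (fun _ => 0, 0) : pt d * R).
  destruct (Hsh (fun p => exists i,
                  (i < length pts)%nat /\ nth i pts p0 = p /\ nth i b false = true))
    as (f & Ff & Hf).
  exists f. split; [exact Ff|].
  unfold subgraph_pattern.
  apply nth_ext with (d := false) (d' := false); [now rewrite length_map|].
  intros i Hi. rewrite length_map in Hi.
  rewrite (nth_map_lt _ _ p0) by exact Hi. apply Bool.eq_iff_eq_true.
  transitivity (f (fst (nth i pts p0)) > snd (nth i pts p0)).
  { destruct Rlt_dec; intuition discriminate. }
  rewrite <- Hf by (now apply nth_In).
  split; [intros (j & Hj & Hji & Hbj) | intro Hbi; now exists i].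
  now rewrite <- (proj1 (NoDup_nth pts p0) Hnd j i Hj Hi Hji).
Qed.

Definition coded_pattern d (w : list (split_code d)) (os : list (option R))
    (pts : list (pt d * R)) : list bool :=
  map (fun p => below (nth (locate d w (fst p)) os None) (snd p)) pts.

Lemma subgraph_pattern_coded d js t pts g :
  (forall J, In J js) -> (forall p, In p pts -> unit_cube d (fst p)) -> G d t g ->
  exists w os, In w (words (split_alphabet d js (map fst pts) t) (pred t)) /\
    In os (words (None :: map Some (map snd pts)) t) /\
    subgraph_pattern d g pts = coded_pattern d w os pts.
Proof.
  intros Hjs Hcube (P & c & (HP & HPt) & Hct & ->).
  destruct (mondrian_locate d js (map fst pts) P Hjs HP) as (w & Hwlen & Hw & Hloc).
  set (level a := threshold (fun y => y < a) (map snd pts)).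
  exists w, (map level c). split; [|split].
  - rewrite <- HPt, <- Hwlen. now apply in_words.
  - rewrite <- Hct, <- (length_map level). apply in_words.
    intros o Ho. apply in_map_iff in Ho as (a & <- & _). apply threshold_in.
  - apply map_ext_in. intros [x y] Hp. simpl.
    assert (Hx : nth (locate d w x) P (empty_cell d) x)
      by (apply Hloc; [exact (in_map fst _ _ Hp) | exact (Hcube _ Hp)]).
    set (k := locate d w x) in *.
    assert (Hk : (k < length c)%nat).
    { rewrite Hct, <- HPt. destruct (Nat.lt_ge_cases k (length P)) as [|Hge]; [assumption|].
      rewrite nth_overflow in Hx by exact Hge. contradiction. }
    rewrite (nth_map_lt _ _ 0) by exact Hk.
    rewrite (pcsum_in_cell d P c x k) by (try apply mondrian_cells_at_le1; congruence).
    apply Bool.eq_iff_eq_true. unfold level.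
    rewrite (below_threshold_iff (fun y => y < nth k c 0));
      [| intros; lra | exact (in_map snd _ _ Hp)].
    destruct Rlt_dec; intuition (discriminate || lra).
Qed.

Lemma shattered_length_bound d (js : list (fintype.ordinal d)) t (pts : list (pt d * R)) :
  (forall J, In J js) -> NoDup pts -> (forall p, In p pts -> unit_cube d (fst p)) ->
  shatters d (G d t) pts ->
  (2 ^ length pts <= (t * (length js * S (length pts))) ^ pred t * S (length pts) ^ t)%nat.
Proof.
  intros Hjs Hnd Hcube Hsh.
  set (A := split_alphabet d js (map fst pts) t).
  set (Y := None :: map Some (map snd pts)).
  replace ((t * (length js * S (length pts))) ^ pred t * S (length pts) ^ t)%nat
    with (length (map (fun '(w, os) => coded_pattern d w os pts)
                      (list_prod (words A (pred t)) (words Y t)))).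
  2:{ rewrite length_map, length_prod, !length_words. unfold A, Y.
      rewrite length_split_alphabet, length_map. simpl. now rewrite !length_map. }
  apply bool_lists_incl_length. intros b Hb.
  destruct (shatters_all_patterns d _ pts Hnd Hsh b Hb) as (g & Gg & <-).
  destruct (subgraph_pattern_coded d js t pts g Hjs Hcube Gg) as (w & os & Hw & Hos & ->).
  apply in_map_iff. exists (w, os). split; [reflexivity | now apply in_prod].
Qed.

Lemma pow_pred_mul_le (a b t : nat) :
  (1 <= a)%nat -> (1 <= t)%nat -> (a ^ pred t * b ^ t <= (a * b) ^ t)%nat.
Proof.
  intros Ha Ht. rewrite Nat.pow_mul_l. apply Nat.mul_le_mono_r.
  apply Nat.pow_le_mono_r; lia.
Qed.

Lemma ln_le x y : 0 < x -> x <= y -> ln x <= ln y.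
Proof. intros Hx [Hxy|<-]; [now left; apply ln_increasing | apply Rle_refl]. Qed.

Lemma ln_le_ln_add_div x K : 0 < x -> 0 < K -> ln x <= ln K + x / K.
Proof.
  intros Hx HK.
  assert (HxK : 0 < x / K) by (apply Rdiv_lt_0_compat; assumption).
  replace (ln x) with (ln K + ln (x / K))
    by (rewrite <- ln_mult by assumption; f_equal; field; lra).
  pose proof (exp_ineq1_le (ln (x / K))) as E. rewrite exp_ln in E by exact HxK. lra.
Qed.

Lemma linear_le_of_log_bound (D T N : R) : 1 <= D -> 2 <= T -> 0 <= N ->
  N * ln 2 <= T * (ln T + ln D + 2 * ln (N + 1)) ->
  N <= 4 * (2 * ln D + 4 * ln 8 + 4) * T * ln T.
Proof.
  intros HD HT HN H.
  pose proof ln_lt_2 as Hln2.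
  assert (HlnD : 0 <= ln D) by (rewrite <- ln_1; apply ln_le; lra).
  assert (Hln8 : 0 <= ln 8) by (rewrite <- ln_1; apply ln_le; lra).
  assert (HlnT : ln 2 <= ln T) by (apply ln_le; lra).
  (* Trade the logarithm of [N + 1] for a small multiple of [N]. *)
  assert (Hlog : 2 * T * ln (N + 1) <= 2 * T * ln 8 + 2 * T * ln T + (N + 1) / 4).
  { pose proof (ln_le_ln_add_div (N + 1) (8 * T) ltac:(lra) ltac:(lra)) as E.
    rewrite ln_mult in E by lra.
    replace ((N + 1) / 4) with (2 * T * ((N + 1) / (8 * T))) by (field; lra).
    nra. }
  assert (HTlnT : 1 <= T * ln T) by nra.
  assert (HN4 : N / 4 <= T * ln D + 3 * (T * ln T) + 2 * T * ln 8 + 1 / 4) by nra.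
  assert (H2lnT : 0 <= 2 * ln T - 1) by lra.
  pose proof (Rmult_le_pos (T * ln D) _ ltac:(nra) H2lnT).
  pose proof (Rmult_le_pos (T * ln 8) _ ltac:(nra) H2lnT).
  nra.
Qed.

Definition mondrian_vc_constant (d : nat) : R := 4 * (2 * ln (INR d) + 4 * ln 8 + 4).

Lemma mondrian_vc_constant_pos d : (1 <= d)%nat -> 0 < mondrian_vc_constant d.
Proof.
  intro Hd. unfold mondrian_vc_constant.
  assert (0 <= ln (INR d)) by (rewrite <- ln_1; apply ln_le; [lra | apply (le_INR 1); exact Hd]).
  assert (0 <= ln 8) by (rewrite <- ln_1; apply ln_le; lra).
  lra.
Qed.

Lemma vc_bound_of_pow2_le d t n : (1 <= d)%nat -> (2 <= t)%nat ->
  (2 ^ n <= (t * (d * S n) * S n) ^ t)%nat ->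
  INR n <= mondrian_vc_constant d * INR t * ln (INR t).
Proof.
  intros Hd Ht H. apply le_INR in H.
  rewrite !pow_INR, !mult_INR, (S_INR n), (INR_IZR_INZ 2) in H. simpl in H.
  assert (HD : 1 <= INR d) by (apply (le_INR 1); exact Hd).
  assert (HT : 2 <= INR t) by (apply (le_INR 2); exact Ht).
  assert (HN : 0 <= INR n) by apply pos_INR.
  apply ln_le in H; [|apply pow_lt; lra].
  rewrite !ln_pow, !ln_mult in H by (repeat apply Rmult_lt_0_compat; lra).
  apply linear_le_of_log_bound; [exact HD | exact HT | exact HN | lra].
Qed.

From mathcomp Require Import ssreflect ssrbool ssrnat eqtype seq fintype.

Lemma In_enum_ord d (J : 'I_d) : In J (enum 'I_d).
Proof.
  have : J \in enum 'I_d by rewrite mem_enum.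
  elim: (enum 'I_d) => [|K s IH] //=; rewrite inE => /orP [/eqP ->|/IH]; [by left | by right].
Qed.

Lemma length_enum_ord d : length (enum 'I_d) = d.
Proof. rewrite -[RHS](size_enum_ord d). by elim: (enum 'I_d) => //= K s ->. Qed.

Theorem lemmaA6 :
  forall d : nat, (1 <= d)%N ->
  exists c : R, 0 < c /\
    forall t : nat, (2 <= t)%N ->
      VC_le d (G d t) (c * INR t * ln (INR t)).
Proof.
  move=> d /leP Hd. exists (mondrian_vc_constant d); split; first exact: mondrian_vc_constant_pos.
  move=> t /leP Ht pts Hnd Hcube Hsh.
  apply: vc_bound_of_pow2_le => //.
  apply: Nat.le_trans (shattered_length_bound d (enum 'I_d) t pts (@In_enum_ord d) Hnd Hcube Hsh) _.
  rewrite length_enum_ord. apply: pow_pred_mul_le; lia.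
Qed.
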